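(* Let $Q$ be a locally point symmetric convex polytope in $\mathbb{R}^D$ with vertices in $\mathbb{Z}^D$, and let $A\subset L(Q)$. Let $\mathbf{v}_1$ and $\mathbf{v}_2$ be a pair of strictly antipodal vertices of $Q$, and let $E_1$ and $E_2$ be parallel edges of $Q$ with $\mathbf{v}_1 \in E_1$ and $\mathbf{v}_2 \in E_2$. Suppose $A\cap E_1 = T_{E_1}(S_1)$ and $A\cap E_2 = T_{E_2}(S_2)$, where $S_1,S_2\subset\mathbb{Z}$ and $T_{E_1},T_{E_2}:\mathbb{R}\to\mathbb{R}^D$ are injective affine transformations with the same associated linear transformation. Then there exists an injective affine transformation $T_{E_2-E_1}:\mathbb{R}\to\mathbb{R}^D$ with $$(A-A)\cap (E_2-E_1) = T_{E_2-E_1}(S_2-S_1).$$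
   Context: $L(Q) = Q\cap\mathbb{Z}^D$. For sets $X,Y$, $X-Y=\{x-y: x\in X,y\in Y\}$. Two vertices $\mathbf{u},\mathbf{v}$ of a convex polytope $Q$ are strictly antipodal if there exist parallel supporting hyperplanes $H_1,H_2$ of $Q$ with $H_1\cap Q=\{\mathbf{u}\}$ and $H_2 \cap Q = \{\mathbf{v}\}$. The supporting cone of $Q$ at a vertex $\mathbf{v}$ is $C(\mathbf{v}) = \mathbf{v} + \bigcup_{\lambda \ge 0}\lambda(Q - \mathbf{v})$. A convex polytope $Q$ with $m$ vertices is locally point symmetric if its vertices can be partitioned into $m/2$ pairs of strictly antipodal vertices such that for each pair $\{\mathbf{u},\mathbf{v}\}$, $C(\mathbf{u}) - \mathbf{u} = \mathbf{v} - C(\mathbf{v})$. *)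

From HB Require Import structures.
From mathcomp Require Import all_boot all_order all_algebra.
From mathcomp Require Import boolp classical_sets reals.
Set Implicit Arguments. Unset Strict Implicit. Unset Printing Implicit Defensive.
Import Order.TTheory GRing.Theory Num.Theory.
Local Open Scope ring_scope.
Local Open Scope classical_set_scope.

Section Defs.
Variables (R : realType) (D : nat).
Notation pt := 'rV[R]_D.

Definition dot (c x : pt) : R := \sum_(i < D) c 0 i * x 0 i.

Definition intpt (x : pt) : Prop := forall i : 'I_D, exists z : int, x 0 i = z%:~R.

Definition latpts (Q : set pt) : set pt := [set x | Q x /\ intpt x].

Definition conv (V : seq pt) : set pt :=
  [set x | exists w : 'I_(size V) -> R,
     (forall i, 0 <= w i) /\ \sum_i w i = 1 /\ x = \sum_i w i *: V`_i].

Definition is_polytope (Q : set pt) : Prop := exists V : seq pt, Q = conv V.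

Definition is_vertex (Q : set pt) (v : pt) : Prop :=
  Q v /\ exists c : pt, c != 0 /\ forall x, Q x -> x != v -> dot c x < dot c v.

Definition segment (a b : pt) : set pt :=
  [set x | exists t : R, 0 <= t <= 1 /\ x = (1 - t) *: a + t *: b].

Definition is_edge (Q : set pt) (E : set pt) : Prop :=
  (exists a b : pt, a != b /\ E = segment a b) /\
  exists (c : pt) (beta : R), c != 0 /\ (forall x, Q x -> dot c x <= beta) /\
     E = [set x | Q x /\ dot c x = beta].

Definition parallel_edges (E1 E2 : set pt) : Prop :=
  exists (a1 b1 a2 b2 : pt) (mu : R),
    E1 = segment a1 b1 /\ E2 = segment a2 b2 /\ a1 != b1 /\ a2 != b2 /\
    mu != 0 /\ b1 - a1 = mu *: (b2 - a2).

Definition strictly_antipodal (Q : set pt) (u v : pt) : Prop :=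
  Q u /\ Q v /\ exists c : pt, c != 0 /\
    (forall x, Q x -> x != u -> dot c x < dot c u) /\
    (forall x, Q x -> x != v -> dot c v < dot c x).

Definition supp_cone (Q : set pt) (v : pt) : set pt :=
  [set x | exists (lam : R) (q : pt), 0 <= lam /\ Q q /\ x = v + lam *: (q - v)].

Definition mdiff (T : zmodType) (X Y : set T) : set T :=
  [set z | exists x y, X x /\ Y y /\ z = x - y].

(* locally point symmetric: the vertices are partitioned into pairs
   (encoded by a fixed-point-free involution sigma on the vertex set) of
   strictly antipodal vertices {u, v} with C(u) - u = v - C(v) *)
Definition locally_point_symmetric (Q : set pt) : Prop :=
  exists sigma : pt -> pt, forall u, is_vertex Q u ->
    [/\ is_vertex Q (sigma u), sigma u != u, sigma (sigma u) = u,
        strictly_antipodal Q u (sigma u) &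
        mdiff (supp_cone Q u) [set u] = mdiff [set sigma u] (supp_cone Q (sigma u))].

Definition affine_line (T : R -> pt) (p d : pt) : Prop := forall t, T t = p + t *: d.

Definition img_int (T : R -> pt) (S : set int) : set pt := [set x | exists s : int, S s /\ x = T (s%:~R)].

End Defs.

(* The cone condition C(v1) - v1 = sigma(v1) - C(sigma(v1)) writes every x in Q
   as sigma(v1) - x = lam (q - v1) with lam >= 0 and q in Q, so sigma(v1)
   minimises on Q every linear functional that v1 maximises; strict
   antipodality then forces sigma(v1) = v2.  Let c1 . x <= b1 cut out E1.  Then
   v2 minimises c1 on Q and c1 is constant on the parallel edge E2, so for
   a, a' in Q with a - a' in E2 - E1, comparing c1-values forces a' in E1 and
   c1 . a = c1 . v2.  In v2 - a = lam (q - v1) this puts q in E1, and the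
   functional cutting out E2, being constant along E1, puts a in E2.  Hence
   (A - A) \cap (E2 - E1) = (A \cap E2) - (A \cap E1) = T2(S2) - T1(S1), the
   image of S2 - S1 under t |-> (p2 - p1) + t d. *)
From HB Require Import structures.
From mathcomp Require Import all_boot all_order all_algebra.
From mathcomp Require Import boolp classical_sets reals.
From mathcomp Require Import lra.
Set Implicit Arguments. Unset Strict Implicit. Unset Printing Implicit Defensive.
Import Order.TTheory GRing.Theory Num.Theory.
Local Open Scope ring_scope.
Local Open Scope classical_set_scope.

Lemma mdiff_setI_split (T : zmodType) (A E2 E1 : set T) :
  (forall a a', A a -> A a' -> mdiff E2 E1 (a - a') -> E2 a /\ E1 a') ->
  mdiff A A `&` mdiff E2 E1 = mdiff (A `&` E2) (A `&` E1).
Proof.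
move=> split_diff; apply/seteqP; split=> z.
- move=> [[a [a' [Aa [Aa' ->]]]] diffE].
  have [E2a E1a'] := split_diff _ _ Aa Aa' diffE.
  by exists a, a'.
- move=> [a [a' [[Aa E2a] [[Aa' E1a'] ->]]]].
  by split; [exists a, a' | exists a, a'].
Qed.

Section Geometry.
Variables (R : realType) (D : nat).
Implicit Types (Q E : set 'rV[R]_D) (a b c u v w x y q : 'rV[R]_D).

Lemma dotB c x y : dot c (x - y) = dot c x - dot c y.
Proof. by rewrite /dot -sumrB; apply: eq_bigr => i _; rewrite !mxE mulrBr. Qed.

Lemma dotZ c k x : dot c (k *: x) = k * dot c x.
Proof. by rewrite /dot mulr_sumr; apply: eq_bigr => i _; rewrite !mxE mulrCA. Qed.

Lemma segment_diff a b x y :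
  segment a b x -> segment a b y -> exists r : R, x - y = r *: (b - a).
Proof.
have seg_eq t : (1 - t) *: a + t *: b = a + t *: (b - a).
  by rewrite scalerBl scale1r scalerBr addrAC addrA.
move=> [t [_ ->]] [s [_ ->]]; exists (t - s).
by rewrite !seg_eq opprD addrACA subrr add0r scalerBl.
Qed.

Lemma segment_dot_eq c a b :
  dot c a = dot c b -> forall x y, segment a b x -> segment a b y -> dot c x = dot c y.
Proof.
move=> cab x y segx segy; have [r exy] := segment_diff segx segy.
by apply/eqP; rewrite -subr_eq0 -dotB exy dotZ dotB cab subrr mulr0.
Qed.

Lemma segment_endpoints a b : segment a b a /\ segment a b b.
Proof.
split; [exists 0 | exists 1]; rewrite ?lexx ?ler01 //.
- by rewrite subr0 scale1r scale0r addr0.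
- by rewrite subrr scale0r scale1r add0r.
Qed.

Lemma parallel_edgesC (E1 E2 : set 'rV[R]_D) : parallel_edges E1 E2 -> parallel_edges E2 E1.
Proof.
move=> [a1 [b1 [a2 [b2 [mu [-> [-> [ab1 [ab2 [mu0 dir]]]]]]]]]].
exists a2, b2, a1, b1, mu^-1; do 5 split=> //; first by rewrite invr_eq0.
by rewrite dir scalerA mulVf // scale1r.
Qed.

Lemma parallel_edges_dot_eq (E1 E2 : set 'rV[R]_D) c : parallel_edges E1 E2 ->
  (forall x y, E1 x -> E1 y -> dot c x = dot c y) ->
  forall x y, E2 x -> E2 y -> dot c x = dot c y.
Proof.
move=> [a1 [b1 [a2 [b2 [mu [-> [-> [_ [_ [mu0 dir]]]]]]]]]] const1.
apply: segment_dot_eq; apply/eqP; rewrite eq_sym -subr_eq0 -dotB.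
have [sega1 segb1] := segment_endpoints a1 b1.
have /eqP := const1 _ _ segb1 sega1.
by rewrite -subr_eq0 -dotB dir dotZ mulf_eq0 (negbTE mu0).
Qed.

Lemma edge_face Q E : is_edge Q E -> exists c (beta : R),
  (forall x, Q x -> dot c x <= beta) /\ forall x, E x <-> Q x /\ dot c x = beta.
Proof. by move=> [_ [c [beta [_ [le ->]]]]]; exists c, beta. Qed.

Lemma edge_dot_eq Q E c (beta : R) : (forall x, E x <-> Q x /\ dot c x = beta) ->
  forall x y, E x -> E y -> dot c x = dot c y.
Proof. by move=> Ec x y /Ec[_ ->] /Ec[_ ->]. Qed.

Section ReflectedCones.
Variables (Q : set 'rV[R]_D) (u w : 'rV[R]_D).
Hypothesis cone_sym : mdiff (supp_cone Q u) [set u] = mdiff [set w] (supp_cone Q w).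

Lemma reflected_cone_diff x :
  Q x -> exists (lam : R) q, 0 <= lam /\ Q q /\ w - x = lam *: (q - u).
Proof.
move=> Qx; have : mdiff [set w] (supp_cone Q w) (w - x).
  exists w, x; do 2 split=> //.
  by exists 1, x; rewrite scale1r addrC subrK ler01.
rewrite -cone_sym => -[_ [_ [[lam [q [lam0 [Qq ->]]]] [-> wx]]]].
by exists lam, q; rewrite wx addrC addKr.
Qed.

Lemma reflected_cone_dot_le c :
  (forall x, Q x -> dot c x <= dot c u) -> forall x, Q x -> dot c w <= dot c x.
Proof.
move=> max_u x Qx; have [lam [q [lam0 [Qq wx]]]] := reflected_cone_diff Qx.
rewrite -subr_le0 -dotB wx dotZ dotB mulr_ge0_le0 // subr_le0.
exact: max_u.
Qed.

Lemma reflected_cone_antipode v : Q w -> strictly_antipodal Q u v -> w = v.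
Proof.
move=> Qw [Qu [Qv [c [_ [lt_u gt_v]]]]].
have max_u x : Q x -> dot c x <= dot c u.
  by move=> Qx; have [->|xu] := eqVneq x u; [exact: lexx | exact/ltW/lt_u].
apply/eqP; apply: contraT => wv.
by have := reflected_cone_dot_le max_u Qv; rewrite leNgt (gt_v _ Qw wv).
Qed.

Lemma reflected_cone_opposite_face c a : Q u ->
  (forall x, Q x -> dot c x <= dot c u) -> Q a -> dot c a = dot c w ->
  exists (lam : R) q, Q q /\ dot c q = dot c u /\ w - a = lam *: (q - u).
Proof.
move=> Qu max_u Qa caw; have [lam [q [_ [Qq wa]]]] := reflected_cone_diff Qa.
have [lam_eq0|lam_neq0] := eqVneq lam 0.
  by exists 0, u; rewrite wa lam_eq0 !scale0r.
exists lam, q; split=> //; split=> //.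
have /eqP := congr1 (dot c) wa.
rewrite dotZ !dotB caw subrr eq_sym mulf_eq0 (negbTE lam_neq0) subr_eq0.
by move/eqP.
Qed.

Lemma reflected_cone_edges (E1 E2 : set 'rV[R]_D) a a' :
  is_edge Q E1 -> is_edge Q E2 -> parallel_edges E1 E2 -> E1 u -> E2 w ->
  Q a -> Q a' -> mdiff E2 E1 (a - a') -> E2 a /\ E1 a'.
Proof.
move=> edge1 edge2 par E1u E2w Qa Qa' [e2 [e1 [E2e2 [E1e1 diff]]]].
have [c1 [beta1 [le1 E1P]]] := edge_face edge1.
have [c2 [beta2 [_ E2P]]] := edge_face edge2.
have /E1P[Qu c1u] := E1u.
have max_u x : Q x -> dot c1 x <= dot c1 u by rewrite c1u; apply: le1.
have c1_E2 := parallel_edges_dot_eq par (edge_dot_eq E1P).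
have c2_E1 := parallel_edges_dot_eq (parallel_edgesC par) (edge_dot_eq E2P).
have c1a : dot c1 w <= dot c1 a := reflected_cone_dot_le max_u Qa.
have c1a' : dot c1 a' <= beta1 := le1 _ Qa'.
have c1diff : dot c1 a - dot c1 a' = dot c1 w - beta1.
  by rewrite -dotB diff dotB (c1_E2 _ _ E2e2 E2w) (edge_dot_eq E1P E1e1 E1u) c1u.
have c1a'_eq : dot c1 a' = beta1 by lra.
have c1a_eq : dot c1 a = dot c1 w by lra.
split; last exact/E1P.
have [lam [q [Qq [c1q wa]]]] :=
  reflected_cone_opposite_face Qu max_u Qa c1a_eq.
have E1q : E1 q by apply/E1P; rewrite c1q.
apply/E2P; split=> //; have /E2P[_ <-] := E2w.
apply/eqP; rewrite eq_sym -subr_eq0 -dotB wa dotZ dotB (c2_E1 _ _ E1q E1u).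
by rewrite subrr mulr0.
Qed.

End ReflectedCones.

Lemma affine_line_injective (T : R -> 'rV[R]_D) p d :
  affine_line T p d -> injective T <-> d != 0.
Proof.
move=> Tdef; split=> [injT | d0 s t].
- apply: contraTneq (@oner_neq0 R) => d0; apply/negPn/eqP.
  by apply: injT; rewrite !Tdef d0 !scaler0.
- rewrite !Tdef => /addrI/eqP; rewrite -subr_eq0 -scalerBl scaler_eq0.
  by rewrite (negbTE d0) orbF subr_eq0 => /eqP.
Qed.

Lemma img_int_mdiff (T1 T2 : R -> 'rV[R]_D) p1 p2 d S1 S2 :
  affine_line T1 p1 d -> affine_line T2 p2 d ->
  mdiff (img_int T2 S2) (img_int T1 S1) =
  img_int (fun t => p2 - p1 + t *: d) (mdiff S2 S1).
Proof.
move=> T1def T2def.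
have T2B s2 s1 : T2 s2%:~R - T1 s1%:~R = p2 - p1 + (s2 - s1)%:~R *: d.
  by rewrite T2def T1def intrB scalerBl opprD addrACA.
apply/seteqP; split=> z.
- move=> [_ [_ [[s2 [S2s2 ->]] [[s1 [S1s1 ->]] ->]]]].
  by exists (s2 - s1); split; [exists s2, s1 | exact: T2B].
- move=> [_ [[s2 [s1 [S2s2 [S1s1 ->]]]] ->]].
  exists (T2 s2%:~R), (T1 s1%:~R); rewrite T2B.
  by split; [exists s2 | split; [exists s1|]].
Qed.

End Geometry.

Theorem lemma5 (R : realType) (D : nat) (Q A : set 'rV[R]_D)
  (v1 v2 : 'rV[R]_D) (E1 E2 : set 'rV[R]_D) (S1 S2 : set int)
  (T1 T2 : R -> 'rV[R]_D) (p1 p2 d : 'rV[R]_D) :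
  is_polytope Q ->
  (forall v, is_vertex Q v -> intpt v) ->
  locally_point_symmetric Q ->
  A `<=` latpts Q ->
  is_vertex Q v1 -> is_vertex Q v2 ->
  strictly_antipodal Q v1 v2 ->
  is_edge Q E1 -> is_edge Q E2 -> parallel_edges E1 E2 ->
  E1 v1 -> E2 v2 ->
  affine_line T1 p1 d -> affine_line T2 p2 d ->
  injective T1 -> injective T2 ->
  A `&` E1 = img_int T1 S1 ->
  A `&` E2 = img_int T2 S2 ->
  exists (T : R -> 'rV[R]_D) (p d' : 'rV[R]_D),
    affine_line T p d' /\ injective T /\
    mdiff A A `&` mdiff E2 E1 = img_int T (mdiff S2 S1).
Proof.
move=> _ _ [sigma lps] AQ v1_vertex _ anti edge1 edge2 par E1v1 E2v2
  T1def T2def injT1 _ AE1 AE2.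
have [[Qsigma _] _ _ _ cone_sym] := lps v1 v1_vertex.
have sigma_v1 := reflected_cone_antipode cone_sym Qsigma anti.
rewrite sigma_v1 in cone_sym.
pose T t := p2 - p1 + t *: d.
have Tdef : affine_line T (p2 - p1) d by [].
exists T, (p2 - p1), d; split=> //; split.
  by apply/(affine_line_injective Tdef)/(affine_line_injective T1def).
rewrite mdiff_setI_split ?AE1 ?AE2; first exact: img_int_mdiff.
move=> a a' /AQ[Qa _] /AQ[Qa' _].
exact: (reflected_cone_edges cone_sym edge1 edge2 par E1v1 E2v2 Qa Qa').
Qed.
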